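(* We have $\sup_A\overline{\mathrm{d}}(A)=1$, where the supremum is over all L-primitive sets $A\subset\mathbb{Z}_{>1}$ and $\overline{\mathrm{d}}(A)=\limsup_{x\to\infty}|A\cap[1,x]|/x$ is the upper natural density.
   Context: For an integer $a>1$ let $P(a)$ be its largest prime factor and $\mathrm{L}_a=\{ba: b\in\mathbb{N},\ \text{every prime } p\mid b \text{ satisfies } p\ge P(a)\}$. A set $A\subset\mathbb{Z}_{>1}$ is L-primitive if $a'\notin\mathrm{L}_a$ for all distinct $a,a'\in A$. *)

From mathcomp Require Import all_boot all_order all_algebra.
From mathcomp Require Import all_classical all_reals all_analysis.
Set Implicit Arguments. Unset Strict Implicit. Unset Printing Implicit Defensive.
Import Order.TTheory GRing.Theory Num.Theory.

Definition inL (a a' : nat) : Prop :=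
  exists b : nat, 0 < b /\ a' = b * a /\
    (forall p : nat, prime p -> p %| b -> max_pdiv a <= p).

Definition L_primitive (A : pred nat) : Prop :=
  (forall a, A a -> 1 < a) /\
  (forall a a', A a -> A a' -> a <> a' -> ~ inL a a').

Definition count_upto (A : pred nat) (n : nat) : nat :=
  \sum_(1 <= k < n.+1) A k.

Local Open Scope ring_scope.
Definition upper_density (R : realType) (A : pred nat) : \bar R :=
  limn_esup (fun n : nat => ((count_upto A n)%:R / n%:R : R)%:E).

From mathcomp Require Import all_boot all_order all_algebra.
From mathcomp Require Import all_classical all_reals all_analysis.
From mathcomp Require Import zify.

(* Fix [K > 0] and choose rapidly growing blocks [(R_j, y_j)]; block [j] consists
   of the integers in [(y_j, K y_j]] whose largest prime factor exceeds [R_j].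
   No element of a block lies in [L_a] for another [a] of the same block, since
   [a' in L_a], [a' <> a] forces [a' >= P(a) a > K y_j]; and [L_a] for [a] in a
   later block misses earlier blocks.  So deleting from each block the elements
   of [L_a], [a] in an earlier block, leaves an L-primitive set [A].
   At [x = K y_l] little has been deleted: an element of [L_a] is [a b] with [b]
   coprime to [R_j!], and [phi(R!)/R! <= 1/H_R] is as small as we want, while
   there are only [(log x)^(R_l + 1)] integers up to [x] that are [R_l]-smooth.
   Hence [|A /\ [1, x]| >= x - 4 y_l = (1 - 4/K) x] for infinitely many [x]. *)

Lemma sum_nat_eq1 g k : \sum_(0 <= i < k) (i == g) = (g < k).
Proof.
elim: k => [|k IHk]; first by rewrite big_geq.
by rewrite big_nat_recr //= IHk ltnS eq_sym; case: ltngtP.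
Qed.

Lemma sum_nat_gt y k : \sum_(0 <= n < k) (y < n) = k - y.+1.
Proof.
elim: k => [|k IHk]; first by rewrite big_geq.
by rewrite big_nat_recr //= IHk; case: (ltnP y k) => ?; lia.
Qed.

Lemma sum_nat_halves y l : \sum_(0 <= j < l) y %/ 2 ^ j.+1 <= y.
Proof.
elim: l y => [|l IHl] y; first by rewrite big_geq.
rewrite big_nat_recl //=.
under eq_bigr do rewrite expnS divnMA.
by have := IHl (y %/ 2); rewrite expn1; lia.
Qed.

Lemma leq_sum_nat_range m n (F1 F2 : nat -> nat) :
  (forall i, m <= i < n -> F1 i <= F2 i) ->
  \sum_(m <= i < n) F1 i <= \sum_(m <= i < n) F2 i.
Proof.
move=> leF; rewrite big_nat_cond [leqRHS]big_nat_cond.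
by apply: leq_sum => i /andP[/leF].
Qed.

Lemma leq_sum_nat_term m n i (F : nat -> nat) :
  m <= i < n -> F i <= \sum_(m <= k < n) F k.
Proof.
move=> /andP[le_mi lt_in]; rewrite (big_cat_nat _ (n := i)) ?(ltnW lt_in) //=.
by rewrite (big_ltn lt_in) /= addnCA leq_addr.
Qed.

Lemma sum_dvdn_divn a Z (Q : pred nat) : 0 < a ->
  \sum_(0 <= m < a * Z) ((a %| m) && Q (m %/ a)) = \sum_(0 <= b < Z) Q b.
Proof.
move=> a_gt0; elim: Z => [|Z IHZ]; first by rewrite muln0 !big_geq.
rewrite mulnSr big_nat_recr //= -IHZ (big_cat_nat _ (n := a * Z)) ?leq_addr //=.
congr (_ + _); rewrite -{1}[a * Z]add0n big_addn addKn big_ltn //=.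
rewrite add0n dvdn_mulr // mulKn // big_nat_cond big1 ?addn0 // => r.
by case/andP=> /andP[r_gt0 r_lt_a] _; rewrite dvdn_addl ?dvdn_mulr // gtnNdvd.
Qed.

Lemma leq_sum_nat_prefix m n (F : nat -> nat) : m <= n ->
  \sum_(0 <= i < m) F i <= \sum_(0 <= i < n) F i.
Proof. by move=> le_mn; rewrite [leqRHS](big_cat_nat _ le_mn) ?leq_addr. Qed.

Definition coprime_count N Y := \sum_(0 <= b < Y) coprime b N.

Lemma leq_coprime_count N : {homo coprime_count N : Y Y' / Y <= Y'}.
Proof. by move=> Y Y'; apply: leq_sum_nat_prefix. Qed.

Lemma coprime_count_mull N k : coprime_count N (k * N) = k * coprime_count N N.
Proof.
elim: k => [|k IHk]; first by rewrite /coprime_count !mul0n big_geq.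
rewrite !mulSn -IHk /coprime_count (big_cat_nat _ (n := N)) ?leq_addr //=.
congr (_ + _); rewrite -{1}[N]add0n big_addn addKn.
by apply: eq_bigr => b _; rewrite /coprime gcdnC gcdnDr gcdnC.
Qed.

Lemma coprime_count_le_density c N Y : 0 < N ->
  c * coprime_count N N <= N -> c * coprime_count N Y <= Y + N.
Proof.
move=> N_gt0 sparseN; set k := (Y %/ N).+1.
have le_Y_kN : Y <= k * N by rewrite ltnW // ltn_ceil.
apply: (@leq_trans (c * coprime_count N (k * N))).
  by rewrite leq_mul2l leq_coprime_count ?orbT.
rewrite coprime_count_mull mulnCA (leq_trans (leq_mul (leqnn k) sparseN)) //.
by rewrite mulSn addnC leq_add2r leq_divM.
Qed.

(* That is, [phi(R!)/R! <= 1/H_R]: with [N = R!], every [m < N * N] is counted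
   for at most one [n], namely [n = gcdn m N]. *)
Lemma coprime_count_fact_harmonic R :
  coprime_count R`! R`! * \sum_(1 <= n < R.+1) R`! %/ n <= R`! * R`!.
Proof.
set N := R`!; have N_gt0 : 0 < N := fact_gt0 R.
have termE n : 1 <= n < R.+1 -> coprime_count N N * (N %/ n) =
    \sum_(0 <= m < N * N) ((n %| m) && coprime (m %/ n) N).
  case/andP=> n_gt0 lt_nR; have dvd_nN : n %| N by rewrite dvdn_fact // n_gt0.
  have -> : N * N = n * (N %/ n * N) by rewrite mulnA mulnC (mulnC n) divnK.
  rewrite (sum_dvdn_divn _ _ (fun b => coprime b N)) //.
  by rewrite -[RHS]/(coprime_count N _) coprime_count_mull mulnC.
rewrite big_distrr (eq_big_nat _ _ termE) exchange_big_nat /=.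
apply: (@leq_trans (\sum_(0 <= m < N * N) 1)); last first.
  by rewrite sum_nat_const_nat subn0 muln1.
apply: leq_sum => m _.
apply: (@leq_trans (\sum_(0 <= n < R.+1) (n == gcdn m N))); last first.
  by rewrite sum_nat_eq1 leq_b1.
rewrite [leqRHS]big_ltn // (leq_trans _ (leq_addl _ _)) //.
apply: leq_sum_nat_range => n /andP[n_gt0 lt_nR].
case: (boolP (n %| m)) => //= dvd_nm; case: (boolP (coprime _ _)) => //= cop.
have dvd_nN : n %| N by rewrite dvdn_fact // n_gt0.
rewrite -(divnK dvd_nm) gcdnC Gauss_gcdr; last by rewrite coprime_sym.
by rewrite (gcdn_idPr dvd_nN) eqxx.
Qed.

Lemma leq_harmonic_pow2 N t : (forall n, 0 < n <= 2 ^ t -> n %| N) ->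
  t * (N %/ 2) <= \sum_(1 <= n < (2 ^ t).+1) N %/ n.
Proof.
elim: t => [|t IHt] dvdN; first by rewrite mul0n.
have le_pow : 2 ^ t <= 2 ^ t.+1 by rewrite leq_pexp2l.
rewrite (big_cat_nat _ (n := (2 ^ t).+1)) //= mulSn addnC leq_add //.
  by apply: IHt => n /andP[n_gt0 le_n]; rewrite dvdN ?n_gt0 ?(leq_trans le_n).
have [q ->] : exists q, N = q * 2 ^ t.+1.
  by apply/dvdnP; apply: dvdN; rewrite expn_gt0 leqnn.
apply: (@leq_trans (\sum_((2 ^ t).+1 <= n < (2 ^ t.+1).+1) q)).
  rewrite sum_nat_const_nat subSS.
  have -> : 2 ^ t.+1 - 2 ^ t = 2 ^ t by rewrite expnS mul2n -addnn addnK.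
  by rewrite expnS mulnCA mulKn // mulnC.
apply: leq_sum_nat_range => n /andP[lt_n le_n].
apply: (@leq_trans (q * 2 ^ t.+1 %/ 2 ^ t.+1)); first by rewrite mulnK ?expn_gt0.
by apply: leq_div2l => //; apply: leq_ltn_trans (leq0n _) lt_n.
Qed.

(* [H_(2^t) >= t/2 > c] for [t = 2 c + K + 1]. *)
Lemma exists_fact_coprime_sparse c K :
  exists2 R, K <= R & c * coprime_count R`! R`! <= R`!.
Proof.
set t := (2 * c + K).+1; exists (2 ^ t).
  by apply: leq_trans (ltnW (ltn_expl t (ltnSn 1))); rewrite /t -addSn leq_addl.
set N := (2 ^ t)`!; set phi := coprime_count N N.
have N_even : N = N %/ 2 * 2.
  by rewrite divnK // dvdn_fact // /t expnS leq_pmulr ?expn_gt0.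
have half_gt0 : 0 < N %/ 2.
  by move: (fact_gt0 (2 ^ t)); rewrite -/N {1}N_even muln_gt0 => /andP[].
have sieve : phi * (t * (N %/ 2)) <= N * N.
  apply: leq_trans (coprime_count_fact_harmonic _).
  by rewrite leq_mul2l leq_harmonic_pow2 ?orbT // => n; apply: dvdn_fact.
have bound : phi * t <= 2 * N.
  rewrite -(leq_pmul2r half_gt0) -mulnA (leq_trans sieve) //.
  by rewrite mulnAC (mulnC 2 (N %/ 2)) -N_even.
rewrite -(leq_pmul2l (isT : 0 < 2)); apply: leq_trans bound.
by rewrite mulnA mulnC leq_mul2l /t leqW ?leq_addr ?orbT.
Qed.

Definition smooth_count x R := \sum_(0 <= n < x.+1) (max_pdiv n <= R).

Lemma logn_lt_pow2 p n L : 0 < n -> n < 2 ^ L -> logn p n < L.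
Proof.
move=> n_gt0 lt_n; case: (boolP (prime p)) => [p_pr|]; last first.
  by rewrite lognE => /negPf->; case: L lt_n => //; rewrite expn0; lia.
rewrite -(ltn_exp2l _ _ (ltnSn 1)) (leq_ltn_trans _ lt_n) //.
apply: leq_trans (dvdn_leq n_gt0 (pfactor_dvdnn p n)).
by elim: (logn p n) => // e IHe; rewrite !expnS leq_mul ?prime_gt1.
Qed.

(* A positive [R]-smooth [n] is determined by the exponents [logn p n], [p <= R]. *)
Lemma card_smooth_upto x R L : x < 2 ^ L.+1 ->
  #|[pred n : 'I_x.+1 | (0 < n) && (max_pdiv n <= R)]| <= L.+1 ^ R.+1.
Proof.
move=> lt_x; set S := [pred n : 'I_x.+1 | _].
pose exps (n : 'I_x.+1) : {ffun 'I_R.+1 -> 'I_L.+1} :=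
  [ffun p : 'I_R.+1 => inord (logn p n)].
rewrite -(card_in_imset (f := exps)).
  by rewrite (leq_trans (max_card _)) // card_ffun !card_ord.
have smooth_pnat (n : 'I_x.+1) : n \in S -> [pred p | p <= R].-nat n.
  case/andP=> n_gt0 smooth_n; apply/pnatP=> // p p_pr dvd_pn.
  by rewrite inE (leq_trans _ smooth_n) // max_pdiv_max // mem_primes p_pr n_gt0.
have logn_small (n : 'I_x.+1) p : n \in S -> logn p n < L.+1.
  by case/andP=> n_gt0 _; apply: logn_lt_pow2 (leq_ltn_trans _ lt_x); rewrite -ltnS.
move=> m n Sm Sn /ffunP eq_exps; apply: val_inj => /=.
rewrite -(part_pnat_id (smooth_pnat m Sm)) -(part_pnat_id (smooth_pnat n Sn)).
apply: eq_partn_from_log; [by case/andP: Sm | by case/andP: Sn | move=> p le_pR].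
have := congr1 val (eq_exps (Ordinal (le_pR : p < R.+1))).
by rewrite !ffunE /= !inordK ?logn_small.
Qed.

Lemma smooth_count_bound x R L : x < 2 ^ L.+1 -> smooth_count x R <= 1 + L.+1 ^ R.+1.
Proof.
move=> lt_x; rewrite /smooth_count big_ltn // leq_add ?leq_b1 //.
apply: leq_trans (card_smooth_upto _ _ _ lt_x).
rewrite big_geq_mkord -sum1_card [leqRHS]big_mkcond [leqLHS]big_mkcond /=.
by apply: leq_sum => n _; rewrite inE; case: (0 < n); case: (_ <= R).
Qed.

Lemma exists_pow2_gt_poly d b M : exists2 E, M <= E & 1 + (E + b) ^ d <= 2 ^ E.
Proof.
set t := M + b + 2 * d + 1; set E := 2 ^ (t + t).
have lt_t : t < 2 ^ t := ltn_expl t (ltnSn 1).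
have E_sq : E = 2 ^ t * 2 ^ t by rewrite /E expnD.
have le_tE : t <= E by rewrite E_sq (leq_trans (ltnW lt_t)) // leq_pmulr ?expn_gt0.
exists E; first by apply: leq_trans le_tE; rewrite /t; lia.
have le_b : b <= E by apply: leq_trans le_tE; rewrite /t; lia.
have le_poly : (E + b) ^ d <= 2 ^ ((t + t).+1 * d).
  rewrite expnM expnS -/E; case: (posnP d) => [->|d_gt0] //; rewrite leq_exp2r //; lia.
have le_deg : ((t + t).+1 * d).+1 <= E.
  by rewrite E_sq (leq_trans _ (leq_mul lt_t lt_t)) // /t; nia.
apply: leq_trans (leq_pexp2l (isT : 0 < 2) le_deg).
by rewrite expnS mul2n -addnn leq_add // expn_gt0.
Qed.

Lemma prime_dvd_fact p R : prime p -> p %| R`! -> p <= R.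
Proof.
move=> p_pr; elim: R => [|R IHR]; first by rewrite dvdn1 => /eqP p1; rewrite p1 in p_pr.
rewrite factS Euclid_dvdM // => /orP[/dvdn_leq-> // | /IHR/leqW //].
Qed.

Lemma coprime_fact b R : 0 < b ->
  (forall p, prime p -> p %| b -> R < p) -> coprime b R`!.
Proof.
move=> b_gt0 large; rewrite coprime_has_primes ?fact_gt0 //.
apply/hasPn => p; rewrite !mem_primes b_gt0 fact_gt0 /= => /andP[p_pr dvd_pR].
by rewrite p_pr /=; apply/negP => /(large _ p_pr); rewrite ltnNge prime_dvd_fact.
Qed.

Lemma inL_leq {a a'} : inL a a' -> a <= a'.
Proof. by case=> b [b_gt0 [-> _]]; rewrite leq_pmull. Qed.

Lemma inL_neq_leq {a a'} : a != a' -> inL a a' -> max_pdiv a * a <= a'.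
Proof.
move=> neq_aa' [b [b_gt0 [def_a' large_b]]].
have b_gt1 : 1 < b.
  rewrite ltn_neqAle b_gt0 andbT; apply: contraNneq neq_aa' => b1.
  by rewrite def_a' -b1 mul1n.
rewrite def_a' leq_mul2r (leq_trans (large_b _ (pdiv_prime b_gt1) (pdiv_dvd b))) //.
  by rewrite orbT.
by rewrite pdiv_leq // ltnW.
Qed.

Section DenseLPrimitiveSet.

Variable K : nat.
Hypothesis K_gt0 : 0 < K.

Definition block_weight j := K.+1 * K * 2 ^ j.+1.

Definition block_error (b : nat * nat) := (K * b.2).+1 * (1 + b.1`!).

(* A block [b = (R, y)] stands for the integers in [(y, K y]] with a prime factor
   above [R]; [S] is the total [block_error] of the earlier blocks. *)
Definition good_block j S (b : nat * nat) :=
  [&& K <= b.1, block_weight j * coprime_count b.1`! b.1`! <= b.1`!,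
      S < b.2 & smooth_count (K * b.2) b.1 <= b.2].

Lemma good_block_exists j S : exists b, good_block j S b.
Proof.
have [R le_KR sparse_R] := exists_fact_coprime_sparse (block_weight j) K.
have [E le_SE small_E] := exists_pow2_gt_poly R.+1 K S.+1.
exists (R, 2 ^ E); apply/and4P; split => //=.
  exact: leq_trans le_SE (ltnW (ltn_expl E (ltnSn 1))).
have E_gt0 : 0 < E by apply: leq_trans le_SE.
have lt_x : K * 2 ^ E < 2 ^ (E + K).-1.+1.
  by rewrite prednK ?addn_gt0 ?E_gt0 // expnD mulnC ltn_pmul2l ?expn_gt0 // ltn_expl.
apply: leq_trans (smooth_count_bound _ _ _ lt_x) _.
by rewrite prednK ?addn_gt0 ?E_gt0.
Qed.

Fixpoint error_sum j :=
  if j is i.+1 then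
    error_sum i + block_error (xchoose (good_block_exists i (error_sum i)))
  else 0.

Definition block j : nat * nat := xchoose (good_block_exists j (error_sum j)).

Local Notation Rb j := (block j).1.
Local Notation yb j := (block j).2.

Lemma block_good j : good_block j (error_sum j) (block j).
Proof. exact: xchooseP. Qed.

Lemma leq_K_Rb j : K <= Rb j.
Proof. by case/and4P: (block_good j). Qed.

Lemma Rb_sparse j : block_weight j * coprime_count (Rb j)`! (Rb j)`! <= (Rb j)`!.
Proof. by case/and4P: (block_good j). Qed.

Lemma error_sum_lt j : error_sum j < yb j.
Proof. by case/and4P: (block_good j). Qed.

Lemma yb_gt0 j : 0 < yb j.
Proof. exact: leq_ltn_trans (leq0n _) (error_sum_lt j). Qed.

Lemma smooth_count_block j : smooth_count (K * yb j) (Rb j) <= yb j.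
Proof. by case/and4P: (block_good j). Qed.

Lemma leq_error_sum : {homo error_sum : i j / i <= j}.
Proof. by apply: homo_leq => // [m n p|i]; [apply: leq_trans | apply: leq_addr]. Qed.

Lemma leq_error_sum_id j : j <= error_sum j.
Proof. by elim: j => //= j IHj; rewrite -addn1 leq_add // muln_gt0. Qed.

Lemma ltn_scale_block {i j} : i < j -> K * yb i < yb j.
Proof.
move=> lt_ij; apply: leq_ltn_trans _ (error_sum_lt j).
apply: leq_trans _ (leq_error_sum _ _ lt_ij); rewrite /= -/(block i).
by apply: leq_trans (leq_addl _ _); rewrite /block_error ltnW // leq_pmulr.
Qed.

Definition in_block j n := [&& yb j < n, n <= K * yb j & Rb j < max_pdiv n].

Definition dense_set : pred nat := fun n =>
  `[< exists2 l, in_block l n & forall j a, j < l -> in_block j a -> ~ inL a n >].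

Lemma dense_set_L_primitive : L_primitive dense_set.
Proof.
split=> [n /asboolP[l /and3P[lt_yn _ _] _] | a a'].
  exact: leq_ltn_trans (yb_gt0 l) lt_yn.
move=> /asboolP[j Ba _] /asboolP[l Ba' earlier] /eqP neq_aa' aLa'.
case: (ltngtP j l) => [lt_jl | lt_lj | eq_jl]; first exact: earlier _ _ lt_jl Ba aLa'.
all: case/and3P: Ba => lt_ya le_aK lt_Ra; case/and3P: Ba' => lt_ya' le_a'K _.
  by have := ltn_scale_block lt_lj; have := inL_leq aLa'; lia.
have le_KP : K <= max_pdiv a := leq_trans (leq_K_Rb j) (ltnW lt_Ra).
have := inL_neq_leq neq_aa' aLa'; rewrite -eq_jl in le_a'K; nia.
Qed.

Definition block_hit j n a := [&& in_block j a, a %| n & coprime (n %/ a) (Rb j)`!].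

Lemma block_hits_at j a x : in_block j a ->
  block_weight j * \sum_(0 <= n < x.+1) block_hit j n a <= (x %/ yb j).+1 + (Rb j)`!.
Proof.
move=> Ba; have a_gt0 : 0 < a by case/and3P: Ba => /(leq_ltn_trans (leq0n _)).
apply: (@leq_trans (block_weight j * coprime_count (Rb j)`! (x %/ a).+1)).
  rewrite leq_mul2l /coprime_count -(sum_dvdn_divn _ _ (fun b => coprime b _) a_gt0).
  apply/orP; right; rewrite mulnC.
  apply: (@leq_trans (\sum_(0 <= n < x.+1) ((a %| n) && coprime (n %/ a) (Rb j)`!))).
    by apply: leq_sum => n _; rewrite /block_hit Ba.
  exact: leq_sum_nat_prefix (ltn_ceil x a_gt0).
apply: leq_trans (coprime_count_le_density _ _ _ (fact_gt0 _) (Rb_sparse j)) _.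
rewrite leq_add2r ltnS; apply: leq_div2l; first exact: yb_gt0.
by case/and3P: Ba => /ltnW.
Qed.

Lemma block_weight_gt0 j : 0 < block_weight j.
Proof. by rewrite !muln_gt0 K_gt0 expn_gt0. Qed.

Lemma block_hits_le j y :
  \sum_(0 <= a < (K * yb j).+1) \sum_(0 <= n < (K * y).+1) block_hit j n a
    <= y %/ 2 ^ j.+1 + block_error (block j).
Proof.
set B := \sum_(0 <= a < _) _; set E := block_error (block j).
have weighted : block_weight j * B <= K.+1 * (K * y) + E.
  rewrite big_distrr /=.
  apply: (@leq_trans (\sum_(0 <= a < (K * yb j).+1) ((K * y %/ yb j).+1 + (Rb j)`!))).
    apply: leq_sum_nat_range => a _; have [Ba | nBa] := boolP (in_block j a).
      exact: block_hits_at.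
    by rewrite big1 ?muln0 // => n _; rewrite /block_hit (negPf nBa).
  rewrite sum_nat_const_nat subn0 /E /block_error add1n addSnnS mulnDr leq_add2r.
  rewrite mulSn [leqRHS]mulSn -mulnA leq_add ?leq_div //.
  by rewrite leq_mul2l [yb j * _]mulnC leq_divM orbT.
have : B * 2 ^ j.+1 <= y + E * 2 ^ j.+1.
  rewrite -(@leq_pmul2l (K.+1 * K)) ?muln_gt0 ?K_gt0 // mulnDr (mulnC B) mulnA.
  apply: leq_trans weighted _; rewrite mulnA leq_add2l mulnCA leq_pmulr //.
  exact: block_weight_gt0.
by rewrite -leq_divRL ?expn_gt0 // divnDMl ?expn_gt0.
Qed.

Lemma block_hit_inL j a n : in_block j a -> inL a n -> block_hit j n a.
Proof.
move=> Ba [b [b_gt0 [-> large_b]]]; have /and3P[lt_ya _ lt_Ra] := Ba.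
have a_gt0 : 0 < a := leq_ltn_trans (leq0n _) lt_ya.
rewrite /block_hit Ba dvdn_mull //= mulnK // coprime_fact // => p p_pr dvd_pb.
exact: leq_trans lt_Ra (large_b p p_pr dvd_pb).
Qed.

Lemma cover_scale_block l n : n <= K * yb l ->
  (yb l < n) <= dense_set n + (max_pdiv n <= Rb l)
                + \sum_(0 <= j < l) \sum_(0 <= a < (K * yb j).+1) block_hit j n a.
Proof.
move=> le_nK; have [lt_yn|] := ltnP (yb l) n; last by [].
have [|lt_Rn] := leqP (max_pdiv n) (Rb l); first by rewrite addnAC leq_addl.
have [|nAn] := boolP (dense_set n); first by rewrite -addnA leq_addr.
have [[j lt_jl [a Ba aLn]] | no_hit] :=
  pselect (exists2 j, j < l & exists2 a, in_block j a & inL a n); last first.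
  case/negP: nAn; apply/asboolP; exists l; first by rewrite /in_block lt_yn le_nK.
  by move=> j a lt_jl Ba aLn; apply: no_hit; exists j => //; exists a.
apply: leq_trans (leq_sum_nat_term _ _ j _ _) => //.
have /and3P[_ le_aK _] := Ba.
by apply: leq_trans (leq_sum_nat_term _ _ a _ _); rewrite ?block_hit_inL.
Qed.

Lemma error_sumE l : error_sum l = \sum_(0 <= j < l) block_error (block j).
Proof.
by elim: l => [|l IHl]; [rewrite big_geq | rewrite big_nat_recr // -IHl].
Qed.

Lemma dense_set_count l : K * yb l <= count_upto dense_set (K * yb l) + 4 * yb l.
Proof.
set y := yb l; set x := K * y.
have cover : \sum_(0 <= n < x.+1) (y < n) <= \sum_(0 <= n < x.+1)
    (dense_set n + (max_pdiv n <= Rb l)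
     + \sum_(0 <= j < l) \sum_(0 <= a < (K * yb j).+1) block_hit j n a).
  by apply: leq_sum_nat_range => n /andP[_ lt_nx]; apply: cover_scale_block.
have countE : \sum_(0 <= n < x.+1) dense_set n = count_upto dense_set x.
  rewrite /count_upto big_ltn //=; have [gt1 _] := dense_set_L_primitive.
  by case: (boolP (dense_set 0)) => // /gt1.
have hits : \sum_(0 <= n < x.+1)
    \sum_(0 <= j < l) \sum_(0 <= a < (K * yb j).+1) block_hit j n a <= y + y.
  rewrite exchange_big_nat /=.
  apply: (@leq_trans (\sum_(0 <= j < l) (y %/ 2 ^ j.+1 + block_error (block j)))).
    by apply: leq_sum_nat_range => j _; rewrite exchange_big_nat; apply: block_hits_le.
  rewrite big_split /= -error_sumE.
  exact: leq_add (sum_nat_halves y l) (ltnW (error_sum_lt l)).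
have smooth := smooth_count_block l; rewrite /smooth_count -/y -/x in smooth.
have le_yx : y <= x by rewrite leq_pmull.
rewrite sum_nat_gt !big_split /= countE in cover; lia.
Qed.

Lemma leq_scale_block l : l <= K * yb l.
Proof.
apply: leq_trans (leq_error_sum_id l) _.
by apply: leq_trans (ltnW (error_sum_lt l)) _; rewrite leq_pmull.
Qed.

End DenseLPrimitiveSet.

Import Order.TTheory GRing.Theory Num.Theory.
Local Open Scope classical_set_scope.
Local Open Scope ring_scope.
Local Open Scope ereal_scope.

Section UpperLimit.
Variable R : realType.
Implicit Types u : (\bar R)^nat.

Lemma limn_esupE u : limn_esup u = ereal_inf (range (esups u)).
Proof. by rewrite limn_esup_lim; apply/cvg_lim => //; apply: cvg_esups_inf. Qed.

Lemma limn_esup_le u l : (forall n, u n <= l) -> limn_esup u <= l.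
Proof.
move=> ub; rewrite limn_esupE; apply: ge_ereal_inf.
exists (esups u 0%N); first by exists 0%N.
by apply: ge_ereal_sup => _ [n _ <-].
Qed.

Lemma limn_esup_ge u l :
  (forall M, exists2 n, (M <= n)%N & l <= u n) -> l <= limn_esup u.
Proof.
move=> often; rewrite limn_esupE; apply: le_ereal_inf_tmp => _ [M _ <-].
by have [n le_Mn le_l] := often M; apply: le_trans le_l (ereal_sup_ubound _); exists n.
Qed.

Lemma upper_density_le1 A : upper_density R A <= 1.
Proof.
apply: limn_esup_le => n; rewrite lee_fin.
have [->|n_gt0] := posnP n; first by rewrite invr0 mulr0 ler01.
rewrite ler_pdivrMr ?ltr0n // mul1r ler_nat /count_upto.
apply: (@leq_trans (\sum_(1 <= k < n.+1) 1)); last first.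
  by rewrite sum_nat_const_nat subn1 muln1.
by apply: leq_sum => k _; apply: leq_b1.
Qed.

Lemma upper_density_dense_set K : (0 < K)%N ->
  (1 - 4 / K%:R)%:E <= upper_density R (dense_set K).
Proof.
move=> K_gt0; apply: limn_esup_ge => M; exists (K * (block K M).2)%N.
  exact: leq_scale_block.
have count := dense_set_count K K_gt0 M; set y := (block K M).2 in count *.
have y_gt0 : (0 < y)%N := yb_gt0 K M.
rewrite lee_fin ler_pdivlMr ?ltr0n ?muln_gt0 ?K_gt0 // mulrBl mul1r lerBlDr.
rewrite natrM mulrA divfK ?pnatr_eq0 -?lt0n // -!natrM -natrD ler_nat.
exact: count.
Qed.

End UpperLimit.

Theorem proposition5p2 (R : realType) :
  ereal_sup [set upper_density R A | A in [set A : pred nat | L_primitive A]] = 1%E.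
Proof.
apply/eqP; rewrite eq_le; apply/andP; split.
  by apply: ge_ereal_sup => _ [A _ <-]; apply: upper_density_le1.
apply/lee_addgt0Pr => e e_gt0; set K := (Num.truncn (4 / e)).+1.
have K_gt0 : (0 < K)%N by [].
have le_4K : (4 / K%:R <= e)%R.
  rewrite ler_pdivrMr ?ltr0n // mulrC -ler_pdivrMr // ltW //.
  exact: truncnS_gt.
have dense := upper_density_dense_set R K K_gt0.
apply: le_trans (leeD (le_trans dense (ereal_sup_ubound _)) (lexx _)); last first.
  by exists (dense_set K) => //; apply: dense_set_L_primitive.
by rewrite -EFinD lee_fin -lerBlDr; apply: lerB.
Qed.
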